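(* For all nonnegative integers $A$, $k$ and $t$, $$k^t \left\{ {A \atop k} \right\} = \sum_{\substack{u,v,w \in \mathbb{N}_0 \\ u+v+w = t}} \binom{t}{u} (-1)^{v} \left\{ {v+w \atop v} \right\} \left\{ {A+u \atop k-v} \right\}.$$
   Context: $\mathbb{N}_0$ denotes the nonnegative integers. $\left\{ {n \atop m} \right\}$ is the Stirling number of the second kind (the number of partitions of an $n$-element set into $m$ nonempty blocks), with $\left\{ {0 \atop 0} \right\} = 1$, $\left\{ {n \atop 0} \right\} = 0$ for $n > 0$, and $\left\{ {n \atop m} \right\} = 0$ whenever $m < 0$ or $m > n$. The convention $0^0 = 1$ is used. *)

From mathcomp Require Import all_boot all_order all_algebra.
Set Implicit Arguments. Unset Strict Implicit. Unset Printing Implicit Defensive.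

Fixpoint stirling2 (n m : nat) : nat :=
  match n, m with
  | 0, 0 => 1
  | 0, _.+1 => 0
  | _.+1, 0 => 0
  | n'.+1, m'.+1 => m'.+1 * stirling2 n' m'.+1 + stirling2 n' m'
  end.

Definition stirling2z (n : nat) (m : int) : nat :=
  match m with
  | Posz m' => stirling2 n m'
  | Negz _ => 0
  end.

From mathcomp Require Import all_boot all_order all_algebra.
From mathcomp Require Import zify ring.
Import GRing.Theory Num.Theory.
Local Open Scope ring_scope.

(* Write [S] for Stirling numbers extended by zero to negative lower indices
   and [C_t(A, k)] for the right-hand side of the identity, with the inner
   sum over [w] already collapsed to [w = t - u - v].  Both recurrences
   [S(B+1, m) = m S(B, m) + S(B, m-1)] (on the upper index [A + u] and on the
   index [t - u] of the alternating factor) combine, through Pascal's rule on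
   [binom(t, u)], into [k C_t(A, k) = C_(t+1)(A, k)]; together with
   [C_0(A, k) = S(A, k)] this gives [C_t(A, k) = k^t S(A, k)]. *)

Definition stirling2_int (n : nat) (m : int) : int := (stirling2z n m)%:Z.

Lemma stirling2_small n m : (n < m)%N -> stirling2 n m = 0%N.
Proof.
elim: n m => [|n IHn] [|m] //= ltnm.
by rewrite !IHn ?muln0 //; lia.
Qed.

Lemma stirling2_int_neg n m : m < 0 -> stirling2_int n m = 0.
Proof. by case: m. Qed.

Lemma mul_stirling2_int n (m : int) :
  m * stirling2_int n m = stirling2_int n.+1 m - stirling2_int n (m - 1).
Proof.
case: m => [[|m]|m].
- by rewrite mul0r /stirling2_int /=.
- have -> : Posz m.+1 - 1 = Posz m by rewrite -addn1 PoszD addrK.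
  rewrite /stirling2_int /= PoszD PoszM; ring.
- rewrite (@stirling2_int_neg n (Negz m - 1)) ?subr0; last by lia.
  by rewrite /stirling2_int /= mulr0.
Qed.

Definition stirling2_conv (m n : nat) (k : int) : int :=
  \sum_(v < m.+1) (-1) ^+ v * (stirling2 m v)%:Z * stirling2_int n (k - v%:Z).

Lemma stirling2_conv_widen m n k N : (m < N)%N ->
  stirling2_conv m n k =
  \sum_(v < N) (-1) ^+ v * (stirling2 m v)%:Z * stirling2_int n (k - v%:Z).
Proof.
move=> ltmN; rewrite /stirling2_conv.
rewrite (big_ord_widen N (fun v => (-1) ^+ v * (stirling2 m v)%:Z
                                    * stirling2_int n (k - v%:Z))) //.
rewrite big_mkcond /=; apply: eq_bigr => v _.
by case: ifP => // ltvm; rewrite stirling2_small ?mulr0 ?mul0r //; lia.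
Qed.

Lemma mul_stirling2_conv m n k :
  k * stirling2_conv m n k = stirling2_conv m n.+1 k + stirling2_conv m.+1 n k.
Proof.
pose a v := (-1) ^+ v * (stirling2 m v)%:Z.
have convS : stirling2_conv m.+1 n k =
    \sum_(v < m.+1) a v * (v%:Z * stirling2_int n (k - v%:Z))
  - \sum_(v < m.+1) a v * stirling2_int n (k - v%:Z - 1).
  have shift : \sum_(v < m.+1) (-1) ^+ v.+1 * (v.+1 * stirling2 m v.+1)%N%:Z
                 * stirling2_int n (k - v.+1%:Z)
             = \sum_(v < m.+1) a v * (v%:Z * stirling2_int n (k - v%:Z)).
    rewrite [LHS]big_ord_recr /= stirling2_small // muln0 mulr0 mul0r addr0.
    rewrite [RHS]big_ord_recl /= mul0r mulr0 add0r.
    by apply: eq_bigr => v _; rewrite /a /bump /= PoszM add1n; ring.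
  rewrite -shift /stirling2_conv big_ord_recl /= mulr0 mul0r add0r -sumrB.
  apply: eq_bigr => v _; rewrite /a /bump /= PoszD exprS !add0n.
  have -> : k - (1 + v)%N%:Z = k - v%:Z - 1 by rewrite PoszD; ring.
  by rewrite PoszD; ring.
rewrite convS /stirling2_conv mulr_sumr -sumrB -big_split /=.
apply: eq_bigr => v _; rewrite -/(a v).
have -> : k * (a v * stirling2_int n (k - v%:Z)) =
  a v * ((k - v%:Z) * stirling2_int n (k - v%:Z)
         + v%:Z * stirling2_int n (k - v%:Z)) by ring.
rewrite mul_stirling2_int; ring.
Qed.

Definition binom_stirling2_sum (t A : nat) (k : int) : int :=
  \sum_(u < t.+1) ('C(t, u))%:Z * stirling2_conv (t - u) (A + u) k.

Lemma binom_stirling2_sum0 A k : binom_stirling2_sum 0 A k = stirling2_int A k.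
Proof.
by rewrite /binom_stirling2_sum big_ord1 /stirling2_conv big_ord1 /= addn0 subr0 !mul1r.
Qed.

Lemma mul_binom_stirling2_sum t A k :
  k * binom_stirling2_sum t A k = binom_stirling2_sum t.+1 A k.
Proof.
rewrite /binom_stirling2_sum mulr_sumr.
under eq_bigr do rewrite mulrCA mul_stirling2_conv mulrDr.
rewrite big_split /= [RHS]big_ord_recl /=.
under [in RHS]eq_bigr do rewrite /bump /= binS PoszD mulrDl.
rewrite big_split /= addrA [RHS]addrC; congr (_ + _).
  by apply: eq_bigr => u _; rewrite add1n subSS addnS.
rewrite [in RHS]big_ord_recr /= (@bin_small t t.+1) // mul0r addr0.
rewrite big_ord_recl /= !bin0 !subn0 !addn0; congr (_ + _).
by apply: eq_bigr => u _; rewrite /bump /= add1n subSS subnSK.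
Qed.

Lemma binom_stirling2_sumE t A k :
  ((k ^ t * stirling2 A k)%N)%:Z = binom_stirling2_sum t A k%:Z.
Proof.
elim: t => [|t IHt]; first by rewrite binom_stirling2_sum0 expn0 mul1n.
by rewrite -mul_binom_stirling2_sum -IHt expnS -mulnA PoszM.
Qed.

Lemma sum_ord_total (t u v : nat) (f : nat -> int) : (u <= t)%N -> (v <= t)%N ->
  \sum_(w < t.+1 | (u + v + w)%N == t) f (v + w)%N =
  if (u + v <= t)%N then f (t - u)%N else 0.
Proof.
move=> leut levt; case: leqP => uvt.
  have ltw : (t - u - v < t.+1)%N by lia.
  rewrite (big_pred1 (Ordinal ltw)); first by congr f; rewrite /=; lia.
  by move=> w /=; rewrite -val_eqE /=; apply/idP/idP => /eqP eqw; apply/eqP; lia.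
by rewrite big_pred0 // => w; apply/negbTE/eqP; lia.
Qed.

Theorem lemma1 (A k t : nat) :
  ((k ^ t * stirling2 A k)%N)%:Z =
  \sum_(u < t.+1) \sum_(v < t.+1) \sum_(w < t.+1 | (u + v + w)%N == t)
    (('C(t, u))%:Z * (-1) ^+ v * (stirling2 (v + w) v)%:Z
       * (stirling2z (A + u) (k%:Z - v%:Z))%:Z).
Proof.
rewrite binom_stirling2_sumE /binom_stirling2_sum; apply: eq_bigr => u _.
have leut : (u <= t)%N by rewrite -ltnS.
rewrite (@stirling2_conv_widen _ _ _ t.+1); last by lia.
rewrite mulr_sumr; apply: eq_bigr => v _.
have levt : (v <= t)%N by rewrite -ltnS.
rewrite (@sum_ord_total t u v (fun n => ('C(t, u))%:Z * (-1) ^+ v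
  * (stirling2 n v)%:Z * (stirling2z (A + u) (k%:Z - v%:Z))%:Z)) //.
case: leqP => uvt; first by rewrite /stirling2_int; ring.
by rewrite stirling2_small ?mulr0 ?mul0r //; lia.
Qed.
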